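(* Let $G$ and $H$ be connected graphs, each with at least $3$ vertices, let $\ell_1=\lambda_3(G)$, $\ell_2=\lambda_3(H)$, $n_2=|V(H)|$. Let $S=\{x,y,z\}$ be a set of three distinct vertices of $G\circ H$ such that exactly two of them lie in a common $H$-layer (i.e., $x,y\in H(u)$ and $z\in H(u')$ for some distinct $u,u'\in V(G)$). Then $G\circ H$ contains at least $\ell_2+\ell_1 n_2$ pairwise edge-disjoint $S$-trees.
   Context: For a graph $G$ and $S\subseteq V(G)$ with $|S|\ge 2$, an $S$-tree is a subgraph that is a tree containing all vertices of $S$; $\lambda(S)$ is the maximum number of pairwise edge-disjoint $S$-trees, and $\lambda_3(G)=\min\{\lambda(S): |S|=3\}$. The lexicographic product $G\circ H$ has vertex set $V(G)\times V(H)$, and $(u,v)$ is adjacent to $(u',v')$ iff either $uu'\in E(G)$, or $u=u'$ and $vv'\in E(H)$. For $u\in V(G)$, the $H$-layer $H(u)$ is the vertex set $\{(u,v): v\in V(H)\}$. *)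

(* Simple graphs as symmetric irreflexive relations on a finType. *)
From mathcomp Require Import all_boot.
Set Implicit Arguments. Unset Strict Implicit. Unset Printing Implicit Defensive.

Section Graphs.
Variable T : finType.
Implicit Types (e : rel T) (S VT : {set T}) (F : {set {set T}}).

Definition simple_graph e := symmetric e /\ irreflexive e.

Definition connected_graph e := forall u v : T, connect e u v.

Definition is_edge e (f : {set T}) := exists u v, e u v /\ f = [set u; v].

Definition adjF F : rel T := fun u v => (u != v) && ([set u; v] \in F).

Definition subgraph e VT F :=
  forall f, f \in F -> is_edge e f /\ f \subset VT.

Definition has_cycle F :=
  exists (u : T) (q : seq T),
    2 <= size q /\ uniq (u :: q) /\ path (adjF F) u q /\ adjF F (last u q) u.

Definition is_tree VT F :=
  (forall u v, u \in VT -> v \in VT -> connect (adjF F) u v) /\ ~ has_cycle F.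

Definition S_tree e S VT F := subgraph e VT F /\ is_tree VT F /\ S \subset VT.

Definition has_disjoint_Strees e S k :=
  exists tr : 'I_k -> {set T} * {set {set T}},
    (forall i, S_tree e S (tr i).1 (tr i).2) /\
    (forall i j, i != j -> [disjoint (tr i).2 & (tr j).2]).

Definition lambdaS_is e S k :=
  has_disjoint_Strees e S k /\ (forall m, has_disjoint_Strees e S m -> m <= k).

Definition lambda3_is e l :=
  (forall S, #|S| = 3 -> exists k, lambdaS_is e S k /\ l <= k) /\
  (exists S, #|S| = 3 /\ lambdaS_is e S l).
End Graphs.

Definition lexprod (T1 T2 : finType) (e1 : rel T1) (e2 : rel T2) : rel (T1 * T2) :=
  fun a b => e1 a.1 b.1 || ((a.1 == b.1) && e2 a.2 b.2).

From mathcomp Require Import all_boot.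
From Stdlib Require Import Classical.
Set Implicit Arguments. Unset Strict Implicit. Unset Printing Implicit Defensive.

(* The proof builds edge-disjoint connected subgraphs ("parts") of G o H and
   prunes each of them to a tree.
   - General part: an edge set connecting S contains an S-tree (delete an edge
     of a cycle, or the edges outside the component of S, and recurse), so
     disjoint connecting edge sets give disjoint S-trees.
   - G-parts: lambda_3(G) = l1 yields l1 edge-disjoint subgraphs F i joining
     u, u' and a third vertex; copy each F i into every layer q and hang x, y
     on the copy of a neighbour bu i of u and z on the copy of a neighbour
     cu i of u'. These are the l1 * |V(H)| G-parts.
   - H-parts: lambda_3(H) = l2 yields l2 subgraphs R j joining v1, v2 and a
     vertex t with w in {v1, v2, t}; copy R j into every layer and join the
     layers along each edge ab of G by an edge (a, t)(b, ht j), where ht j is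
     a neighbour of t in R j, oriented so as to miss the pendant edges of the
     G-parts. *)

Section EdgeSets.
Variable T : finType.
Implicit Types (e : rel T) (F : {set {set T}}).

Lemma eq_set2 (a b c d : T) :
  [set a; b] = [set c; d] -> (a = c /\ b = d) \/ (a = d /\ b = c).
Proof.
move=> E.
have : a \in [set c; d] by rewrite -E !inE eqxx.
have : b \in [set c; d] by rewrite -E !inE eqxx orbT.
have : c \in [set a; b] by rewrite E !inE eqxx.
have : d \in [set a; b] by rewrite E !inE eqxx orbT.
by rewrite !inE; do 4! (case/orP=> /eqP ?); subst; auto.
Qed.

Lemma adjF_sym F : symmetric (adjF F).
Proof. by move=> u v; rewrite /adjF eq_sym setUC. Qed.

Lemma connect_adjF_sym F u v : connect (adjF F) u v = connect (adjF F) v u.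
Proof. exact: (sym_connect_sym (@adjF_sym F)). Qed.

Lemma is_edge_rel e a b : symmetric e -> is_edge e [set a; b] -> e a b.
Proof. by move=> sym_e [c [d [cd /eq_set2 [[-> ->]|[-> ->]]]]]; rewrite // sym_e. Qed.

Lemma connect_delete_edge F u v :
  connect (adjF (F :\ [set u; v])) u v ->
  forall p r, connect (adjF F) p r -> connect (adjF (F :\ [set u; v])) p r.
Proof.
move=> uv p r; apply: connect_sub => c d /andP[cd cdF].
have [/eq_set2 [[-> ->]|[-> ->]]|ne] := eqVneq [set c; d] [set u; v].
- exact: uv.
- by rewrite connect_adjF_sym.
- by apply: connect1; rewrite /adjF cd !inE ne.
Qed.

Lemma path_delete_edge F u v c p :
  path (adjF F) c p -> u \notin c :: p -> path (adjF (F :\ [set u; v])) c p.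
Proof.
elim: p c => [|d p IH] c //= /andP[/andP[cd cdF] pp].
rewrite !inE !negb_or => /and3P[uc ud up].
rewrite IH ?inE ?negb_or ?ud //= andbT /adjF cd !inE cdF andbT.
by apply/negP=> /eqP/eq_set2 [[eu _]|[_ eu]]; [move: uc | move: ud]; rewrite eu eqxx.
Qed.

Lemma cycle_edge_redundant F : has_cycle F ->
  exists2 f, f \in F &
    forall p r, connect (adjF F) p r -> connect (adjF (F :\ f)) p r.
Proof.
case=> u [[|a q] [//= sz_q [/andP[ua /andP[aq _]]]]].
case=> [/andP[/andP[_ auF] pq] /andP[lu luF]].
exists [set u; a] => //; apply: connect_delete_edge.
rewrite connect_adjF_sym; apply: (connect_trans (y := last a q)).
  by apply/connectP; exists q => //; apply: path_delete_edge.
apply: connect1; rewrite /adjF lu !inE luF andbT.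
apply/negP=> /eqP/eq_set2 [[el _]|[el _]].
  by move: lu; rewrite el eqxx.
by case: q sz_q aq el {pq lu luF ua} => // b q _ aq /= el; rewrite -el mem_last in aq.
Qed.
End EdgeSets.

Lemma disjointP (T : finType) (A B : {set T}) :
  reflect (forall x, x \in A -> x \in B -> False) [disjoint A & B].
Proof.
apply: (iffP pred0P) => [dAB x xA xB | nAB x /=].
  by move: (dAB x); rewrite /= xA xB.
by apply/negP=> /andP[xA xB]; exact: nAB xA xB.
Qed.

Section Trees.
Variables (T : finType) (e : rel T) (S : {set T}) (s0 : T).
Implicit Types (F : {set {set T}}).

Lemma connect_in_component F v :
  let VT := [set w | connect (adjF F) s0 w] in
  connect (adjF F) s0 v -> connect (adjF [set f in F | f \subset VT]) s0 v.
Proof.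
move=> VT; set F2 := [set f in F | f \subset VT].
suff walk c p : connect (adjF F) s0 c -> connect (adjF F2) s0 c ->
    path (adjF F) c p -> connect (adjF F2) s0 (last c p).
  by case/connectP=> p pp ->; apply: walk pp; exact: connect0.
elim: p c => [|d p IH] c //= s0c s0cF2 /andP[cd pd].
have s0d := connect_trans s0c (connect1 cd).
apply: IH pd => //; apply: connect_trans s0cF2 (connect1 _).
case/andP: cd => cd cdF; rewrite /adjF cd inE cdF /=.
by apply/subsetP=> w; rewrite !inE => /orP[]/eqP->.
Qed.

(* Any set of edges of e connecting S contains the edge set of an S-tree:
   delete edges of cycles, then edges outside the component of S. *)
Lemma Stree_of_connector F :
  (forall f, f \in F -> is_edge e f) -> s0 \in S ->
  (forall s, s \in S -> connect (adjF F) s0 s) ->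
  exists VT F', F' \subset F /\ S_tree e S VT F'.
Proof.
have [n] := ubnP #|F|; elim: n F => // n IH F /ltnSE leFn edgeF s0S connF.
have recurse F' : F' \proper F -> (forall s, s \in S -> connect (adjF F') s0 s) ->
    exists VT F'', F'' \subset F /\ S_tree e S VT F''.
  move=> ltF' connF'; have subF' := proper_sub ltF'.
  have [||VT [F'' [subF'' treeF'']]] := IH F' _ _ s0S connF'.
  - exact: leq_trans (proper_card ltF') leFn.
  - by move=> f /(subsetP subF'); exact: edgeF.
  by exists VT, F''; split=> //; exact: subset_trans subF'' subF'.
have [cycF | acycF] := classic (has_cycle F).
  have [f fF redundant_f] := cycle_edge_redundant cycF.
  apply: recurse => [|s sS]; last exact: redundant_f (connF s sS).
  by rewrite properD1.
set VT := [set w | connect (adjF F) s0 w].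
have [/forall_inP inVT | /forall_inPn [f fF fVT]] := boolP [forall f in F, f \subset VT].
  exists VT, F; split=> //; split; last split.
  - by move=> f fF; split; [exact: edgeF | exact: inVT].
  - split=> // a b; rewrite !inE => s0a s0b.
    by apply: connect_trans s0b; rewrite connect_adjF_sym.
  - by apply/subsetP=> s sS; rewrite inE connF.
apply: recurse => [|s sS]; last exact: connect_in_component (connF s sS).
apply/properP; split; first by apply/subsetP=> g; rewrite inE => /andP[].
by exists f => //; rewrite inE (negbTE fVT) andbF.
Qed.
End Trees.

Lemma disjoint_Strees_of_connectors (T I : finType) (e : rel T) (S : {set T})
    (s0 : T) (E : I -> {set {set T}}) :
  s0 \in S -> (forall i f, f \in E i -> is_edge e f) ->
  (forall i s, s \in S -> connect (adjF (E i)) s0 s) ->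
  (forall i j, i != j -> [disjoint E i & E j]) -> has_disjoint_Strees e S #|I|.
Proof.
move=> s0S edgeE connE disjE.
have /fin_all_exists [tr trE] : forall i, exists tr : {set T} * {set {set T}},
    tr.2 \subset E i /\ S_tree e S tr.1 tr.2.
  by move=> i; have [VT [F' ?]] := Stree_of_connector (edgeE i) s0S (connE i); exists (VT, F').
exists (fun k => tr (enum_val k)); split=> [k | k k' kk']; first by case: (trE (enum_val k)).
have ne : enum_val k != enum_val k' by apply: contra kk' => /eqP/enum_val_inj ->.
apply/disjointP=> f /(subsetP (proj1 (trE _))) fE /(subsetP (proj1 (trE _))).
by rewrite (disjointFr (disjE _ _ ne) fE).
Qed.

Lemma exists_outside (T : finType) (A : {set T}) : #|A| < #|T| -> exists a, a \notin A.
Proof.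
rewrite -(cardsC A) -addn1 leq_add2l card_gt0 => /set0Pn[a].
by rewrite inE; exists a.
Qed.

Lemma card_set3 (T : finType) (a b c : T) :
  a != b -> a != c -> b != c -> #|[set a; b; c]| = 3.
Proof. by move=> ab ac bc; rewrite -setUA cardsU1 cards2 bc !inE negb_or ab ac. Qed.

Lemma connect_neighbour (T : finType) (r : rel T) a b :
  connect r a b -> a != b -> exists c, r a c.
Proof.
case/connectP=> [[|c p]] /= rp lp; first by rewrite lp eqxx.
by move=> _; exists c; case/andP: rp.
Qed.

Lemma connect_lift (A B : finType) (r : rel A) (s : rel B) (f : A -> B) :
  (forall a b, r a b -> connect s (f a) (f b)) ->
  forall a b, connect r a b -> connect s (f a) (f b).
Proof.
move=> rs a b /connectP [p rp ->]; elim: p a rp => [|c p IH] a /=.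
  by move=> _; exact: connect0.
by case/andP=> ac cp; apply: connect_trans (rs _ _ ac) (IH _ cp).
Qed.

(* If a, b, c are connected by a symmetric relation, then a and b cannot only be
   adjacent to each other: some neighbour p of a and q of b avoid (p, q) = (b, a). *)
Lemma anchor_neighbours (T : finType) (r : rel T) a b c : symmetric r ->
  connect r a b -> connect r a c -> a != b -> c != a -> c != b ->
  exists p q, r a p /\ r b q /\ ~ (p = b /\ q = a).
Proof.
move=> sym_r ab ac nab nca ncb.
have [p ap] := connect_neighbour ab nab.
have [q bq] : exists q, r b q.
  by apply: (connect_neighbour (b := a)); rewrite 1?eq_sym // (sym_connect_sym sym_r).
have [/existsP[p' /andP[ap' p'b]] | /existsPn onlyb] := boolP [exists p', r a p' && (p' != b)].
  by exists p', q; do 2!split=> //; case=> /eqP; rewrite (negbTE p'b).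
have [/existsP[q' /andP[bq' q'a]] | /existsPn onlya] := boolP [exists q', r b q' && (q' != a)].
  by exists p, q'; do 2!split=> //; case=> _ /eqP; rewrite (negbTE q'a).
have stay x y : r x y -> x \in [set a; b] -> y \in [set a; b].
  rewrite !inE => xy /orP[]/eqP ex; subst x.
    by move: (onlyb y); rewrite xy negbK => ->; rewrite orbT.
  by move: (onlya y); rewrite xy negbK => ->.
have closed_ab : closed r [set a; b].
  move=> x y xy; apply/idP/idP; first exact: stay.
  by apply: stay; rewrite sym_r.
move: (closed_connect closed_ab ac); rewrite !inE eqxx /= => /esym/orP[]/eqP ec.
  by rewrite ec eqxx in nca.
by rewrite ec eqxx in ncb.
Qed.

Lemma lambda3_connectors (T : finType) (e : rel T) (S : {set T}) l :
  lambda3_is e l -> #|S| = 3 ->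
  exists F : 'I_l -> {set {set T}},
    [/\ forall i f, f \in F i -> is_edge e f,
        forall i i', i != i' -> [disjoint F i & F i'] &
        forall i a b, a \in S -> b \in S -> connect (adjF (F i)) a b].
Proof.
case=> [lamS _] card_S; have [k [[[tr [trS disj_tr]] _] le_lk]] := lamS S card_S.
exists (fun i => (tr (widen_ord le_lk i)).2); split.
- by move=> i f fF; case: (trS (widen_ord le_lk i)) => /(_ f fF)[].
- move=> i i' ne; apply: disj_tr; apply: contra ne => /eqP[ii'].
  exact/eqP/val_inj.
- move=> i a b aS bS; have [_ [[conn _] sub]] := trS (widen_ord le_lk i).
  by apply: conn; apply: (subsetP sub).
Qed.

Section Construction.
Variables (T1 T2 : finType) (e1 : rel T1) (e2 : rel T2) (l1 l2 : nat).
Variables (u u' : T1) (v1 v2 w t : T2).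
Variables (F : 'I_l1 -> {set {set T1}}) (bu cu : 'I_l1 -> T1).
Variables (R : 'I_l2 -> {set {set T2}}) (ht : 'I_l2 -> T2).
Hypotheses (sym1 : symmetric e1) (irr1 : irreflexive e1) (sym2 : symmetric e2).
Hypothesis conn1 : connected_graph e1.
Hypothesis neq_uu' : u != u'.
Hypothesis neq_v12 : v1 != v2.
Hypotheses (neq_tv1 : t != v1) (neq_tv2 : t != v2) (w_in : w \in [set v1; v2; t]).
Hypothesis edgeF : forall i f, f \in F i -> is_edge e1 f.
Hypothesis disjF : forall i i', i != i' -> [disjoint F i & F i'].
Hypothesis connF : forall i, connect (adjF (F i)) u u'.
Hypothesis adj_bu : forall i, adjF (F i) u (bu i).
Hypothesis adj_cu : forall i, adjF (F i) u' (cu i).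
Hypothesis not_swapped : forall i, ~ (bu i = u' /\ cu i = u).
Hypothesis edgeR : forall j f, f \in R j -> is_edge e2 f.
Hypothesis disjR : forall j j', j != j' -> [disjoint R j & R j'].
Hypothesis connR : forall j s, s \in [set v1; v2; t] -> connect (adjF (R j)) t s.
Hypothesis adj_ht : forall j, adjF (R j) t (ht j).

Definition px := (u, v1).
Definition py := (u, v2).
Definition pz := (u', w).

(* Some G-part hangs z on the copy of u. *)
Definition u_attached := [exists i, cu i == u].
(* flip j b: on the edge ub, t must avoid u (only for b = u', ht j = w). *)
Definition flip j b := [&& b == u', u_attached & ht j == w].

(* t_at j a b: the edge ab of G is realised in the H-part j as (a, t)(b, ht j).
   The orientation avoids the pendant edges of the G-parts: t is put on the side
   of u, except on the edge uu' when flip j u' holds, and on the side of u'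
   exactly when t != w; the remaining edges are oriented arbitrarily. *)
Definition t_at j a b :=
  if a == u then ~~ flip j b else if b == u then flip j a
  else if a == u' then t != w else if b == u' then t == w
  else enum_rank a < enum_rank b.

Definition EG i q : {set {set T1 * T2}} :=
  [set E | [|| [exists ab : T1 * T1, (ab.1 != ab.2) && ([set ab.1; ab.2] \in F i)
                  && (E == [set (ab.1, q); (ab.2, q)])],
              E == [set px; (bu i, q)], E == [set py; (bu i, q)] |
              E == [set pz; (cu i, q)]]].

Definition EH j : {set {set T1 * T2}} :=
  [set E | [exists a, exists pq : T2 * T2, (pq.1 != pq.2) && ([set pq.1; pq.2] \in R j)
                  && (E == [set (a, pq.1); (a, pq.2)])]
        || [exists ab : T1 * T1, e1 ab.1 ab.2 && t_at j ab.1 ab.2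
                  && (E == [set (ab.1, t); (ab.2, ht j)])]].

Lemma t_at_total j a b : a != b -> t_at j a b || t_at j b a.
Proof.
move=> ab; rewrite /t_at.
have [eau|_] := eqVneq a u.
  by move: ab; rewrite -eau eq_sym => /negbTE->; rewrite orNb.
have [_|_] := eqVneq b u; first by rewrite orbN.
have [eau'|_] := eqVneq a u'.
  by move: ab; rewrite -eau' eq_sym => /negbTE->; rewrite orNb.
have [_|_] := eqVneq b u'; first by rewrite orbN.
case: ltngtP => //= /val_inj eab.
by move: ab; rewrite -(inj_eq enum_rank_inj) eab eqxx.
Qed.

Lemma EG_cases i q E : E \in EG i q ->
  (exists a b, a <> b /\ [set a; b] \in F i /\ E = [set (a, q); (b, q)]) \/
  E = [set px; (bu i, q)] \/ E = [set py; (bu i, q)] \/ E = [set pz; (cu i, q)].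
Proof.
rewrite inE => /or4P[/existsP[[a b] /= /andP[/andP[ab abF] /eqP->]]|/eqP->|/eqP->|/eqP->];
  [left; exists a, b; split=> //; exact/eqP | by right; left | by right; right; left
  | by right; right; right].
Qed.

Lemma EH_cases j E : E \in EH j ->
  (exists a p r, p <> r /\ [set p; r] \in R j /\ E = [set (a, p); (a, r)]) \/
  (exists a b, e1 a b /\ t_at j a b /\ E = [set (a, t); (b, ht j)]).
Proof.
rewrite inE => /orP[/existsP[a /existsP[[p r] /= /andP[/andP[pr prR] /eqP->]]]|
                    /existsP[[a b] /= /andP[/andP[ab hs] /eqP->]]].
  by left; exists a, p, r; split=> //; exact/eqP.
by right; exists a, b.
Qed.

Lemma EG_edge i q E : E \in EG i q -> is_edge (lexprod e1 e2) E.
Proof.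
have attach a b al : adjF (F i) a b -> is_edge (lexprod e1 e2) [set (a, al); (b, q)].
  by case/andP=> _ /edgeF/(is_edge_rel sym1) ab; exists (a, al), (b, q); rewrite /lexprod ab.
case/EG_cases=> [[a [b [ab [abF ->]]]]|[->|[->|->]]]; apply: attach => //.
by rewrite /adjF abF andbT; apply/eqP.
Qed.

Lemma EH_edge j E : E \in EH j -> is_edge (lexprod e1 e2) E.
Proof.
case/EH_cases=> [[a [p [r [pr [prR ->]]]]]|[a [b [ab [_ ->]]]]].
- exists (a, p), (a, r); split=> //; rewrite /lexprod /= eqxx /=.
  by rewrite (is_edge_rel sym2 (edgeR prR)) orbT.
- by exists (a, t), (b, ht j); split=> //; rewrite /lexprod /= ab.
Qed.

Lemma EG_connects i q s : s \in [set px; py; pz] -> connect (adjF (EG i q)) px s.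
Proof.
have lift a b : adjF (F i) a b -> adjF (EG i q) (a, q) (b, q).
  move=> /andP[ab abF]; rewrite /adjF inE.
  apply/andP; split; first by apply: contra ab => /eqP[->].
  by apply/orP; left; apply/existsP; exists (a, b); rewrite /= ab abF eqxx.
have pendant p c : [set p; (c, q)] \in EG i q -> p.1 != c ->
    connect (adjF (EG i q)) p (c, q).
  by move=> pE pc; apply: connect1; rewrite /adjF pE andbT; apply: contra pc => /eqP->.
have layer : connect (adjF (EG i q)) (u, q) (u', q).
  exact: (connect_lift (f := fun a => (a, q)) (fun a b h => connect1 (lift a b h)) (connF i)).
have bu_u : connect (adjF (EG i q)) (bu i, q) (u, q).
  by rewrite connect_adjF_sym; apply/connect1/lift.
have u'_cu : connect (adjF (EG i q)) (u', q) (cu i, q) by apply/connect1/lift.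
have nub : u != bu i by case/andP: (adj_bu i).
have nuc : u' != cu i by case/andP: (adj_cu i).
have x_bu : connect (adjF (EG i q)) px (bu i, q) by apply: pendant; rewrite // inE eqxx ?orbT.
have y_bu : connect (adjF (EG i q)) py (bu i, q) by apply: pendant; rewrite // inE eqxx ?orbT.
have z_cu : connect (adjF (EG i q)) pz (cu i, q) by apply: pendant; rewrite // inE eqxx ?orbT.
have x_u := connect_trans x_bu bu_u.
rewrite !inE => /orP[/orP[]|]/eqP->; first exact: connect0.
- by apply: connect_trans x_u _; rewrite connect_adjF_sym; exact: connect_trans y_bu bu_u.
- apply: connect_trans (connect_trans x_u layer) (connect_trans u'_cu _).
  by rewrite connect_adjF_sym.
Qed.

Lemma EH_connects j s : s \in [set px; py; pz] -> connect (adjF (EH j)) px s.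
Proof.
have lift a p r : adjF (R j) p r -> adjF (EH j) (a, p) (a, r).
  move=> /andP[pr prR]; rewrite /adjF inE.
  apply/andP; split; first by apply: contra pr => /eqP[->].
  apply/orP; left; apply/existsP; exists a; apply/existsP; exists (p, r).
  by rewrite /= pr prR eqxx.
have in_layer a s' : s' \in [set v1; v2; t] -> connect (adjF (EH j)) (a, t) (a, s').
  move=> s'S.
  exact: (connect_lift (f := fun p => (a, p)) (fun p r h => connect1 (lift a p r h)) (connR j s'S)).
have ht_t a : connect (adjF (EH j)) (a, ht j) (a, t).
  by rewrite connect_adjF_sym; apply/connect1/lift.
have across a b : e1 a b -> connect (adjF (EH j)) (a, t) (b, t).
  move=> ab; have nab : a != b by apply: contraTneq ab => ->; rewrite irr1.
  have link a' b' : e1 a' b' -> t_at j a' b' -> a' != b' ->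
      connect (adjF (EH j)) (a', t) (b', t).
    move=> ab' tab' nab'; apply: connect_trans (ht_t b'); apply: connect1.
    rewrite /adjF inE; apply/andP; split; first by apply: contra nab' => /eqP[->].
    by apply/orP; right; apply/existsP; exists (a', b'); rewrite /= ab' tab' eqxx.
  case/orP: (t_at_total j nab) => tab; first exact: link.
  by rewrite connect_adjF_sym; apply: link; rewrite 1?sym1 // eq_sym.
have u_u' : connect (adjF (EH j)) (u, t) (u', t).
  exact: (connect_lift (f := fun a => (a, t)) across (conn1 u u')).
have x_ut : connect (adjF (EH j)) px (u, t).
  by rewrite connect_adjF_sym; apply: in_layer; rewrite !inE eqxx.
rewrite !inE => /orP[/orP[]|]/eqP->; first exact: connect0.
- by apply: connect_trans x_ut _; apply: in_layer; rewrite !inE eqxx orbT.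
- by apply: connect_trans (connect_trans x_ut u_u') _; apply: in_layer.
Qed.

Lemma EG_shape i q E : E \in EG i q ->
  exists a b al be, a <> b /\ [set a; b] \in F i /\ E = [set (a, al); (b, be)].
Proof.
case/EG_cases=> [[a [b [ab [abF ->]]]]|[->|[->|->]]].
- by exists a, b, q, q.
- by case/andP: (adj_bu i) => /eqP ? ?; exists u, (bu i), v1, q.
- by case/andP: (adj_bu i) => /eqP ? ?; exists u, (bu i), v2, q.
- by case/andP: (adj_cu i) => /eqP ? ?; exists u', (cu i), w, q.
Qed.

Lemma EG_same_layer i q q' E : E \in EG i q -> E \in EG i q' -> q = q'.
Proof.
have ub : u <> bu i by case/andP: (adj_bu i) => /eqP.
have uc : u' <> cu i by case/andP: (adj_cu i) => /eqP.
have uu' : u <> u' by apply/eqP.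
have v12 : v1 <> v2 by apply/eqP.
have not_sw := @not_swapped i.
case/EG_cases=> [[a [b [ab [abF ->]]]]|[->|[->|->]]];
case/EG_cases=> [[a' [b' [ab' [abF' E2]]]]|[E2|[E2|E2]]];
move/eq_set2: E2; rewrite /px /py /pz => [[[h1 h2]|[h1 h2]]]; try congruence;
exfalso; apply: not_sw; split; congruence.
Qed.

(* No tree F i has bu i = u' while another has cu i' = u: the edge uu' is in at most one. *)
Lemma no_cross_attachment i i' : bu i = u' -> cu i' = u -> False.
Proof.
move=> bu_u' cu_u; have [ei|ne] := eqVneq i i'; first by subst i'; exact: (@not_swapped i).
have f1 : [set u; u'] \in F i by case/andP: (adj_bu i); rewrite bu_u'.
have f2 : [set u; u'] \in F i' by case/andP: (adj_cu i'); rewrite cu_u setUC.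
by move/disjointP: (disjF ne) => disj; exact: disj f1 f2.
Qed.

Lemma EG_disjoint i q i' q' : (i, q) != (i', q') -> [disjoint EG i q & EG i' q'].
Proof.
move=> ne; apply/disjointP => E E1 E2.
have [ei|nei] := eqVneq i i'.
  by subst i'; move: ne; rewrite (EG_same_layer E1 E2) eqxx.
case: (EG_shape E1) => [a [b [al [be [ab [abF E1']]]]]].
case: (EG_shape E2) => [a' [b' [al' [be' [ab' [abF' E2']]]]]].
move/disjointP: (disjF nei) => disj; apply: (disj _ abF).
move: E2'; rewrite E1' => /eq_set2 [[[= -> _] [= -> _]]|[[= -> _] [= -> _]]] //.
by rewrite setUC.
Qed.

Lemma EH_disjoint j j' : j != j' -> [disjoint EH j & EH j'].
Proof.
move=> ne; apply/disjointP => E E1 E2; move/disjointP: (disjR ne) => disj.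
have [j_t j_R] := andP (adj_ht j); have [j'_t j'_R] := andP (adj_ht j').
case: (EH_cases E1) => [[a [p [r [pr [prR E1']]]]]|[a [b [ab [_ E1']]]]];
case: (EH_cases E2) => [[a' [p' [r' [pr' [prR' E2']]]]]|[a' [b' [ab' [_ E2']]]]];
move: E2'; rewrite E1' => /eq_set2 [[h3 h4]|[h3 h4]]; injection h3; injection h4;
intros; subst; try by [rewrite irr1 in ab | rewrite irr1 in ab'].
- exact: (disj _ prR prR').
- by rewrite setUC in prR'; exact: (disj _ prR prR').
- by apply: (disj _ j_R); rewrite (_ : ht j = ht j') //; congruence.
- by move/eqP: j_t => j_t; congruence.
Qed.

(* The three ways an H-part edge could meet a pendant edge of a G-part are
   excluded by the orientation t_at. *)
Lemma t_at_towards_u j a : a != u -> t_at j a u -> flip j a.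
Proof. by move=> au; rewrite /t_at (negbTE au) eqxx. Qed.

Lemma t_at_from_u' j b : b != u' -> t_at j u' b -> t = w -> False.
Proof.
move=> bu'; rewrite /t_at eq_sym (negbTE neq_uu') eqxx.
have [_|_] := eqVneq b u; last by move=> /eqP.
rewrite /flip eqxx /= => /andP[_ /eqP htw] tw.
by case/andP: (adj_ht j) => /eqP; rewrite htw tw.
Qed.

Lemma t_at_towards_u' j a : (a = u -> u_attached) -> a != u' -> t_at j a u' ->
  ht j = w -> False.
Proof.
move=> attached au' + htw; rewrite /t_at.
have [ea|_] := eqVneq a u; first by rewrite /flip eqxx (attached ea) htw eqxx.
rewrite eq_sym (negbTE neq_uu') (negbTE au') eqxx => /eqP tw.
by case/andP: (adj_ht j) => /eqP; rewrite htw tw.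
Qed.

Lemma EG_EH_disjoint i q j : [disjoint EG i q & EH j].
Proof.
apply/disjointP => E EGE EHE.
case: (EH_cases EHE) => [[a [p [r [pr [prR E2]]]]]|[a [b [ab [tab E2]]]]].
  case: (EG_shape EGE) => [a' [b' [al [be [ab' [abF E1]]]]]].
  by move: E2; rewrite E1 => /eq_set2 [[[= ? ?] [= ? ?]]|[[= ? ?] [= ? ?]]]; subst.
have nab : a != b by apply: contraTneq ab => ->; rewrite irr1.
have tht : t <> ht j by case/andP: (adj_ht j) => /eqP.
have tv1 : t <> v1 by apply/eqP.
have tv2 : t <> v2 by apply/eqP.
have nbu : bu i != u by case/andP: (adj_bu i); rewrite eq_sym.
have ncu : cu i != u' by case/andP: (adj_cu i); rewrite eq_sym.
have pendant_xy : b = u -> a = bu i -> False.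
  move=> eb ea; rewrite ea eb in tab.
  case/and3P: (t_at_towards_u nbu tab) => /eqP bu_u' /existsP[i' /eqP cu_u] _.
  exact: (no_cross_attachment bu_u' cu_u).
case/EG_cases: EGE => [[a' [b' [_ [_ E1]]]]|[E1|[E1|E1]]];
  move: E2; rewrite E1 /px /py /pz => /eq_set2 [[[= ? ?] [= ? ?]]|[[= ? ?] [= ? ?]]];
  subst; try congruence; try exact: pendant_xy.
- exact: (t_at_from_u' ncu tab).
- apply: (t_at_towards_u' _ nab tab) => // ea.
  by apply/existsP; exists i; rewrite ea.
Qed.

Definition part (k : 'I_l2 + 'I_l1 * T2) :=
  match k with inl j => EH j | inr iq => EG iq.1 iq.2 end.

Lemma lexprod_disjoint_Strees :
  has_disjoint_Strees (lexprod e1 e2) [set px; py; pz] (l2 + l1 * #|T2|).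
Proof.
have := @disjoint_Strees_of_connectors _ _ (lexprod e1 e2) [set px; py; pz] px part.
rewrite card_sum card_prod !card_ord; apply.
- by rewrite !inE eqxx.
- by case=> [j|[i q]] f /=; [exact: EH_edge | exact: EG_edge].
- by case=> [j|[i q]] s /=; [exact: EH_connects | exact: EG_connects].
- case=> [j|[i q]] [j'|[i' q']] //= ne.
  + exact: EH_disjoint.
  + by rewrite disjoint_sym; exact: EG_EH_disjoint.
  + exact: EG_EH_disjoint.
  + exact: EG_disjoint.
Qed.
End Construction.

Lemma third_vertex (T : finType) (v1 v2 w : T) : 3 <= #|T| ->
  exists t, [/\ t != v1, t != v2 & w \in [set v1; v2; t]].
Proof.
move=> card_T; have [w12 | w_new] := boolP (w \in [set v1; v2]).
  have [t] : exists t, t \notin [set v1; v2].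
    by apply: exists_outside; apply: leq_ltn_trans card_T; rewrite cards2; case: (_ != _).
  rewrite !inE negb_or => /andP[tv1 tv2]; exists t; split=> //.
  by rewrite !inE in w12 *; rewrite w12.
by move: w_new; rewrite !inE negb_or => /andP[wv1 wv2]; exists w; rewrite !inE eqxx orbT.
Qed.

Lemma G_anchors (T : finType) (e : rel T) l u u' :
  lambda3_is e l -> 3 <= #|T| -> u != u' ->
  exists (F : 'I_l -> {set {set T}}) (bu cu : 'I_l -> T),
    [/\ forall i f, f \in F i -> is_edge e f,
        forall i i', i != i' -> [disjoint F i & F i'],
        forall i, connect (adjF (F i)) u u',
        forall i, adjF (F i) u (bu i) /\ adjF (F i) u' (cu i) &
        forall i, ~ (bu i = u' /\ cu i = u)].
Proof.
move=> lam card_T uu'.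
have [u'' [u''u u''u' _]] := third_vertex u u' u card_T.
have [uu'' u'u''] : u != u'' /\ u' != u'' by rewrite ![_ == u'']eq_sym.
set S := [set u; u'; u''].
have [F [edgeF disjF connF]] := lambda3_connectors lam (card_set3 uu' uu'' u'u'').
have /fin_all_exists[bc bcF] : forall i, exists bc : T * T,
    [/\ adjF (F i) u bc.1, adjF (F i) u' bc.2 & ~ (bc.1 = u' /\ bc.2 = u)].
  move=> i; have [uS u'S u''S] : [/\ u \in S, u' \in S & u'' \in S].
    by rewrite !inE !eqxx ?orbT.
  have [p [q [up [u'q not_pq]]]] := anchor_neighbours (@adjF_sym _ (F i))
    (connF i u u' uS u'S) (connF i u u'' uS u''S) uu' u''u u''u'.
  by exists (p, q).
exists F, (fun i => (bc i).1), (fun i => (bc i).2); split=> // i; last by case: (bcF i).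
- by apply: connF; rewrite !inE eqxx ?orbT.
- by case: (bcF i).
Qed.

Lemma H_anchors (T : finType) (e : rel T) l v1 v2 t :
  lambda3_is e l -> v1 != v2 -> t != v1 -> t != v2 ->
  exists (R : 'I_l -> {set {set T}}) (ht : 'I_l -> T),
    [/\ forall j f, f \in R j -> is_edge e f,
        forall j j', j != j' -> [disjoint R j & R j'],
        forall j s, s \in [set v1; v2; t] -> connect (adjF (R j)) t s &
        forall j, adjF (R j) t (ht j)].
Proof.
move=> lam v12 tv1 tv2.
have [v1t v2t] : v1 != t /\ v2 != t by rewrite ![_ == t]eq_sym.
have [R [edgeR disjR connR]] := lambda3_connectors lam (card_set3 v12 v1t v2t).
have [v1S tS] : v1 \in [set v1; v2; t] /\ t \in [set v1; v2; t] by rewrite !inE !eqxx ?orbT.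
have /fin_all_exists[ht adj_ht] : forall j, exists h, adjF (R j) t h.
  by move=> j; apply: connect_neighbour (connR j t v1 tS v1S) tv1.
by exists R, ht; split=> // j s sS; apply: connR.
Qed.

Unset Implicit Arguments.
Theorem lemma3p2 (T1 T2 : finType) (e1 : rel T1) (e2 : rel T2) (l1 l2 : nat)
  (x y z : T1 * T2) :
  simple_graph e1 -> simple_graph e2 ->
  connected_graph e1 -> connected_graph e2 ->
  3 <= #|T1| -> 3 <= #|T2| ->
  lambda3_is e1 l1 -> lambda3_is e2 l2 ->
  x != y -> x.1 = y.1 -> z.1 != x.1 ->
  has_disjoint_Strees (lexprod e1 e2) [set x; y; z] (l2 + l1 * #|T2|).
Proof.
move=> [sym1 irr1] [sym2 _] conn1 _ card_T1 card_T2 lam1 lam2.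
case: x y z => [u v1] [u0 v2] [u' w] /= xy uu0 u'u; subst u0.
have v12 : v1 != v2 by apply: contra xy => /eqP->.
have uu' : u != u' by rewrite eq_sym.
have [F [bu [cu [edgeF disjF connF adjF_bcu not_swapped]]]] := G_anchors lam1 card_T1 uu'.
have [t [tv1 tv2 w_in]] := third_vertex v1 v2 w card_T2.
have [R [ht [edgeR disjR connR adj_ht]]] := H_anchors lam2 v12 tv1 tv2.
apply: (lexprod_disjoint_Strees (t := t) (F := F) (bu := bu) (cu := cu) (R := R) (ht := ht))
  => // i; by case: (adjF_bcu i).
Qed.
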